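(* For $j \geq 0$, define $s_{2j} = (gf)^j$ and $s_{2j+1} = f(gf)^j$. Let $m_i$ denote the $i$-th row in the matrix $M$. Then $m_i = s_i(m_0)$.
   Context: Let $X_2=\{0,1\}$. Define matrices $M_n$ of size $2^n \times n$ with entries in $X_2$ recursively by \[ M_1 = \begin{bmatrix} 0 \\ 1 \end{bmatrix}, \qquad M_{n+1} = \begin{bmatrix} M_n & 0_n \\ M_n^R & 1_n \end{bmatrix}, \] where $M_n^R$ is obtained from $M_n$ by reversing the order of its rows, and $0_n$, $1_n$ are column vectors with $2^n$ entries all equal to $0$, $1$ respectively (the rows of $M_n$ form the binary reflected Gray code of length $n$). Let $M=\lim_{n\to\infty}M_n$ be the infinite limit matrix, with rows indexed from $0$ and regarded as infinite binary words ending in $0^\infty$ (so $m_0=0^\infty$). The binary tree automorphisms $f$ and $g$ are defined recursively by $f(0w)=1w$, $f(1w)=0w$, and $g(0w)=0\,g(w)$, $g(1w)=1\,f(w)$ (and both fix the empty word). Composition is from right to left. *)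

From mathcomp Require Import all_boot.
Set Implicit Arguments. Unset Strict Implicit. Unset Printing Implicit Defensive.

(* Matrices M_n as the list of their 2^n rows (each row a list of n bits).
   Mmat 0 is the 1x0 matrix, so that Mmat 1 = [[0];[1]] = M_1 and
   Mmat n.+1 = [ M_n | 0_n ; M_n^R | 1_n ] as in the paper. *)
Fixpoint Mmat (n : nat) : seq (seq bool) :=
  match n with
  | 0 => [:: [::]]
  | n'.+1 => [seq rcons r false | r <- Mmat n'] ++ [seq rcons r true | r <- rev (Mmat n')]
  end.

Definition word := nat -> bool.

(* Entry (i,k) of the limit matrix M: read off M_n for any n with i < 2^n and
   k < n; n = i + k + 1 suffices (the M_n are nested). *)
Definition Mentry (i k : nat) : bool := nth false (nth [::] (Mmat (i + k + 1)) i) k.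

Definition mrow (i : nat) : word := fun k => Mentry i k.

Definition f (w : seq bool) : seq bool :=
  match w with [::] => [::] | b :: w' => ~~ b :: w' end.

Fixpoint g (w : seq bool) : seq bool :=
  match w with
  | [::] => [::]
  | false :: w' => false :: g w'
  | true :: w' => true :: f w'
  end.

(* Action of a (length- and prefix-preserving) tree automorphism on an
   infinite word: the k-th letter of F(w) is the k-th letter of F applied to
   the prefix of w of length k+1. *)
Definition act (F : seq bool -> seq bool) (w : word) : word :=
  fun k => nth false (F (mkseq w k.+1)) k.

Definition s (i : nat) : seq bool -> seq bool :=
  if odd i then f \o iter i./2 (g \o f) else iter i./2 (g \o f).

From mathcomp Require Import all_boot.
From mathcomp Require Import zify.

(* Row i of M is the binary reflected Gray code of i, least significant bit
   first: its k-th letter is bit k of i xor bit k+1 of i.  Going from i to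
   i+1 flips the first letter when i is even, which is what f does, and when
   i is odd flips the letter just after the first 1, which is what g does.
   As s_{i+1} is f s_i or g s_i according to the parity of i, induction on i
   gives s_i(m_0) = m_i. *)

Definition bit (i k : nat) : bool := odd (i %/ 2 ^ k).

Definition gray (i k : nat) : bool := bit i k (+) bit i k.+1.

Definition gray_word (n i : nat) : seq bool := mkseq (gray i) n.

Lemma bit0 i : bit i 0 = odd i.
Proof. by rewrite /bit divn1. Qed.

Lemma bitS i k : bit i k.+1 = bit i./2 k.
Proof. by rewrite /bit expnS divnMA divn2. Qed.

Lemma grayS i k : gray i k.+1 = gray i./2 k.
Proof. by rewrite /gray !bitS. Qed.

Lemma gray_word_cons n i : gray_word n.+1 i = gray i 0 :: gray_word n i./2.
Proof.
rewrite /gray_word /mkseq /= (iotaDl 1 0) -map_comp.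
by congr (_ :: _); apply: eq_map => k; apply: grayS.
Qed.

Lemma f_gray_word_even n i : ~~ odd i -> f (gray_word n i) = gray_word n i.+1.
Proof.
move=> even_i; case: n => [|n] //.
by rewrite !gray_word_cons /gray !bitS !bit0 /= uphalf_half (negbTE even_i).
Qed.

Lemma g_gray_word_odd n i : odd i -> g (gray_word n i) = gray_word n i.+1.
Proof.
elim: n i => [|n IHn] i odd_i //.
rewrite !gray_word_cons /gray !bitS !bit0 /= uphalf_half odd_i /=.
case odd_half: (odd i./2) => /=; first by rewrite IHn.
by rewrite f_gray_word_even ?odd_half.
Qed.

Lemma s_succ i w : s i.+1 w = (if odd i then g else f) (s i w).
Proof. by rewrite /s /= uphalf_half; case: (odd i). Qed.

Lemma s_gray_word n i : s i (gray_word n 0) = gray_word n i.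
Proof.
elim: i => [|i IHi] //; rewrite s_succ IHi.
by case: ifP => [odd_i | /negbT even_i];
  [rewrite g_gray_word_odd | rewrite f_gray_word_even].
Qed.

Lemma gray_top n i : i < 2 ^ n.+1 -> gray i n = (2 ^ n <= i).
Proof.
move=> lt_i; rewrite /gray /bit (divn_small lt_i) addbF.
have : i %/ 2 ^ n < 2 by rewrite ltn_divLR ?expn_gt0 // -expnS.
rewrite -(divn_gt0 _ (expn_gt0 2 n)).
by case: (i %/ 2 ^ n) => [|[|]].
Qed.

Lemma half_complement m i :
  i < 2 ^ m.+1 -> (2 ^ m.+1 - i.+1)./2 = 2 ^ m - (i./2).+1.
Proof.
(* With i = b + 2h: 2^(m+1) - (i+1) = (1 - b) + 2 (2^m - (h+1)). *)
move=> lt_i; have := odd_double_half i; rewrite expnS.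
have : 0 < 2 ^ m by rewrite expn_gt0.
case: (odd i) => /= pow_gt0 decomp_i; lia.
Qed.

Lemma bit_complement m i k :
  i < 2 ^ m -> k < m -> bit (2 ^ m - i.+1) k = ~~ bit i k.
Proof.
elim: m i k => [|m IHm] i [|k] // lt_i lt_k.
  by rewrite !bit0 oddB // oddX.
rewrite !bitS half_complement // IHm //.
by rewrite ltn_half_double -mul2n -expnS.
Qed.

Lemma gray_word_reflect m i :
  i < 2 ^ m.+1 -> gray_word m (2 ^ m.+1 - i.+1) = gray_word m i.
Proof.
move=> lt_i; apply: (@eq_from_nth _ false); rewrite !size_mkseq // => k lt_k.
rewrite !nth_mkseq // /gray !bit_complement // 1?ltnW //.
by rewrite addNb addbN negbK.
Qed.

Lemma size_Mmat n : size (Mmat n) = 2 ^ n.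
Proof.
by elim: n => [|n IHn] //=; rewrite size_cat !size_map size_rev IHn expnS mul2n addnn.
Qed.

Lemma Mmat_row n i : i < 2 ^ n -> nth [::] (Mmat n) i = gray_word n i.
Proof.
elim: n i => [|n IHn] i lt_i; first by case: i lt_i.
rewrite /gray_word mkseqS -/(gray_word n i) gray_top //= nth_cat size_map size_Mmat.
case: ltnP => [lo | hi]; first by rewrite (nth_map [::]) ?size_Mmat // IHn.
have lt_r : i - 2 ^ n < 2 ^ n by move: lt_i; rewrite expnS; lia.
rewrite (nth_map [::]) ?size_rev ?size_Mmat // nth_rev ?size_Mmat // IHn;
  last by rewrite ltn_subrL expn_gt0.
have -> : 2 ^ n - (i - 2 ^ n).+1 = 2 ^ n.+1 - i.+1 by rewrite expnS; lia.
by rewrite gray_word_reflect.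
Qed.

Lemma mrow_gray i : mrow i =1 gray i.
Proof.
move=> k; rewrite /mrow /Mentry Mmat_row ?nth_mkseq //; first lia.
apply: leq_trans (ltn_expl i (isT : 1 < 2)) _.
by rewrite leq_exp2l //; lia.
Qed.

Theorem mainTheorem10 (i : nat) : mrow i =1 act (s i) (mrow 0).
Proof.
move=> k; rewrite /act (eq_mkseq (mrow_gray 0)) -/(gray_word k.+1 0).
by rewrite s_gray_word nth_mkseq // mrow_gray.
Qed.
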